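(* Let $\Omega$ be a finite subset of $\mathbb{Z}^d\setminus\{0\}$ invariant under all symmetries of $\mathbb{Z}^d$, let $\phi:\mathbb{Z}_{\ge 0}\to[0,\infty)$ satisfy $\phi(0)=\phi(1)=0$ and $\phi(a+b)\ge\phi(a)+\phi(b)$, and let $\rho$ be a probability mass function on $\Omega$ invariant under all symmetries of $\mathbb{Z}^d$. For every $n\ge1$ and every set $A$ of bridges of length $n$, $$\mathbb{P}_{\mathrm{B}_n}(A)=\mathbb{P}_{\mathrm{iB}}^{\otimes\mathbb{N}}\big((\gamma(i))_{i=0}^n\in A\ \big|\ n\in R_\gamma\big).$$
   Context: Walks: sequences $\gamma=(\gamma(i))$ in $\mathbb{Z}^d$ with increments in $\Omega$; $\mathrm{W}_n$ the walks of length $n$ from $0$. With $l_v(\gamma)=\#\{k:\gamma(k)=v\}$, $\sigma(\gamma)=\prod_{v}e^{-\phi(l_v(\gamma))}\prod_{i=1}^n\rho(\gamma(i)-\gamma(i-1))$; $Z_n=\sum_{\mathrm{W}_n}\sigma$, $\lambda_0=\lim_n\tfrac1n\log Z_n$. $x(v)$ is the first coordinate. A bridge of length $n$ is $\gamma\in\mathrm{W}_n$ with $x(\gamma(0))<x(\gamma(i))\le x(\gamma(n))$ for $1\le i\le n$; $\mathrm{B}_n$ is the set of these, and $\mathbb{P}_{\mathrm{B}_n}(\gamma)=\sigma(\gamma)/\sum_{\gamma'\in\mathrm{B}_n}\sigma(\gamma')$. A renewal time of a bridge of length $n$ is $i\in\{1,\dots,n-1\}$ with $x(\gamma(i))<x(\gamma(k))$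 for $k>i$ and $x(\gamma(i))\ge x(\gamma(k))$ for $k<i$; a bridge is irreducible if it has none; $\mathrm{iB}$ is the set of irreducible bridges, and $\mathbb{P}_{\mathrm{iB}}(\gamma)=\sigma(\gamma)e^{-\lambda_0|\gamma|}$ is a probability measure on $\mathrm{iB}$. Concatenation: for walks $\gamma_1$ of length $n$ and $\gamma_2$ of length $m$, $\gamma_1\circ\gamma_2(i)=\gamma_1(i)$ for $i\le n$ and $\gamma_1(n)+\gamma_2(i-n)$ for $n\le i\le n+m$. $\mathbb{P}_{\mathrm{iB}}^{\otimes\mathbb{N}}$ is the law of the semi-infinite walk $\gamma=\gamma_1\circ\gamma_2\circ\cdots$ where $\gamma_1,\gamma_2,\dots$ are i.i.d. with law $\mathbb{P}_{\mathrm{iB}}$; its renewal times are $r_k=|\gamma_1|+\dots+|\gamma_k|$ for $k\ge1$, and $R_\gamma=\{r_k:k\ge1\}$. *)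

From HB Require Import structures.
From mathcomp Require Import all_boot all_order all_algebra perm.
From mathcomp Require Import all_classical all_reals all_analysis.
Set Implicit Arguments. Unset Strict Implicit. Unset Printing Implicit Defensive.
Import Order.TTheory GRing.Theory Num.Theory.
Local Open Scope ring_scope.
Local Open Scope classical_set_scope.

(* Points of Z^(d+1) (dimension d.+1 >= 1, so that the first coordinate exists). *)
Definition pt (d : nat) := 'rV[int]_d.+1.

Definition xcoord {d : nat} (v : pt d) : int := v ord0 ord0.

(* Symmetries of Z^(d+1): signed coordinate permutations (hyperoctahedral group). *)
Definition sym_apply {d : nat} (s : {perm 'I_(d.+1)}) (e : 'I_(d.+1) -> bool) (v : pt d) : pt d :=
  \row_i ((-1) ^+ e i * v ord0 (s i)).

(* A (finite) walk is represented by the list [:: g(0); g(1); ...; g(n)]. *)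
Definition wlen {d : nat} (g : seq (pt d)) : nat := (size g).-1.
Definition wpos {d : nat} (g : seq (pt d)) (i : nat) : pt d := nth 0 g i.

Definition is_walk {d : nat} (Omega : seq (pt d)) (n : nat) (g : seq (pt d)) : bool :=
  [&& size g == n.+1, wpos g 0 == 0 &
      all (fun i => wpos g i.+1 - wpos g i \in Omega) (iota 0 n)].

Fixpoint incr_seqs {d : nat} (Omega : seq (pt d)) (n : nat) : seq (seq (pt d)) :=
  match n with
  | 0 => [:: [::]]
  | n'.+1 => [seq v :: s | v <- undup Omega, s <- incr_seqs Omega n']
  end.
Definition walk_of {d : nat} (s : seq (pt d)) : seq (pt d) := 0 :: scanl +%R 0 s.
Definition Wn {d : nat} (Omega : seq (pt d)) (n : nat) : seq (seq (pt d)) :=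
  map walk_of (incr_seqs Omega n).

Definition ltime {d : nat} (g : seq (pt d)) (v : pt d) : nat := count_mem v g.

Section Weights.
Context {R : realType} {d : nat}.
Variables (phi : nat -> R) (rho : pt d -> R).

(* sigma(g) = prod_v e^{-phi(l_v)} prod_i rho(g(i)-g(i-1));
   unvisited v have l_v = 0 and contribute e^{-phi 0} *)
Definition sigma (g : seq (pt d)) : R :=
  (\prod_(v <- undup g) expR (- phi (ltime g v))) *
  \prod_(i < wlen g) rho (wpos g i.+1 - wpos g i).

Definition Zn (Omega : seq (pt d)) (n : nat) : R := \sum_(g <- Wn Omega n) sigma g.

Definition lambda0 (Omega : seq (pt d)) : R :=
  limn (fun n : nat => (ln (Zn Omega n.+1) / n.+1%:R : R^o)).
End Weights.

Definition is_bridge {d : nat} (Omega : seq (pt d)) (n : nat) (g : seq (pt d)) : bool :=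
  is_walk Omega n g &&
  all (fun i => (xcoord (wpos g 0) < xcoord (wpos g i)) &&
                (xcoord (wpos g i) <= xcoord (wpos g n))) (iota 1 n).

Definition is_renewal {d : nat} (n : nat) (g : seq (pt d)) (i : nat) : bool :=
  [&& (0 < i)%N, (i < n)%N,
      all (fun k => xcoord (wpos g i) < xcoord (wpos g k)) (iota i.+1 (n - i)) &
      all (fun k => xcoord (wpos g k) <= xcoord (wpos g i)) (iota 0 i)].

Definition is_irr_bridge {d : nat} (Omega : seq (pt d)) (g : seq (pt d)) : bool :=
  [&& (0 < wlen g)%N, is_bridge Omega (wlen g) g &
      ~~ has (is_renewal (wlen g) g) (iota 1 (wlen g))].

Definition PBn {R : realType} {d : nat} (phi : nat -> R) (rho : pt d -> R)
  (Omega : seq (pt d)) (n : nat) (A : pred (seq (pt d))) : R :=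
  (\sum_(g <- Wn Omega n | is_bridge Omega n g && A g) sigma phi rho g) /
  (\sum_(g <- Wn Omega n | is_bridge Omega n g) sigma phi rho g).

Definition PiB {R : realType} {d : nat} (phi : nat -> R) (rho : pt d -> R)
  (Omega : seq (pt d)) (g : seq (pt d)) : R :=
  if is_irr_bridge Omega g
  then sigma phi rho g * expR (- lambda0 phi rho Omega * (wlen g)%:R) else 0.

Definition cat_walk {d : nat} (g1 g2 : seq (pt d)) : seq (pt d) :=
  g1 ++ map (fun v => last 0 g1 + v) (behead g2).

Definition prefix_walk {d : nat} (w : nat -> seq (pt d)) (k : nat) : seq (pt d) :=
  foldl cat_walk [:: 0] (mkseq w k).
Definition inf_walk {d : nat} (w : nat -> seq (pt d)) (i : nat) : pt d :=
  nth 0 (prefix_walk w i) i.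

Definition renewal_set {d : nat} (w : nat -> seq (pt d)) : set nat :=
  [set m | exists k : nat, (0 < k)%N /\ m = (\sum_(j < k) wlen (w j))%N].

Definition condprob {dT : measure_display} {T : measurableType dT} {R : realType}
  (P : probability T R) (F E : set T) : R :=
  fine (P (F `&` E)) / fine (P E).

(* Cutting a bridge at all of its renewal times writes it uniquely as a
   concatenation of irreducible bridges, and sigma is multiplicative along such
   a concatenation: after a renewal time the walk stays strictly to the right of
   everything before it, so local times add up site by site, and the junction
   point is visited once by the later piece, where phi 1 = 0.  Hence, outside
   the null event that one of the first n pieces is not an irreducible bridge,
   the event "n is a renewal time and the walk up to time n is g" is the
   cylinder fixing the first pieces to the decomposition of g, which has
   probability sigma(g) e^{-lambda_0 n}.  Summing over the bridges in A and over
   all bridges, the common factor e^{-lambda_0 n} cancels. *)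

From HB Require Import structures.
From mathcomp Require Import all_boot all_order all_algebra perm.
From mathcomp Require Import all_classical all_reals all_analysis.
From mathcomp Require Import zify.
Import Order.TTheory GRing.Theory Num.Theory.
Local Open Scope ring_scope.
Local Open Scope classical_set_scope.

Section Bridges.
Context {d : nat} {Omega : seq (pt d)}.
Implicit Types (g H w : seq (pt d)).

Lemma xcoordD (u v : pt d) : xcoord (u + v) = xcoord u + xcoord v.
Proof. by rewrite /xcoord mxE. Qed.

Lemma xcoordB (u v : pt d) : xcoord (u - v) = xcoord u - xcoord v.
Proof. by rewrite /xcoord !mxE. Qed.

Lemma xcoord0 : xcoord (0 : pt d) = 0.
Proof. by rewrite /xcoord mxE. Qed.

Lemma bridgeP n g : is_bridge Omega n g <->
  [/\ size g = n.+1, wpos g 0 = 0,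
      (forall i, (i < n)%N -> wpos g i.+1 - wpos g i \in Omega) &
      (forall i, (0 < i <= n)%N -> 0 < xcoord (wpos g i) <= xcoord (wpos g n))].
Proof.
rewrite /is_bridge /is_walk; split.
- case/andP=> /and3P[/eqP gs /eqP g0 /allP gi] /allP gx; split => //.
  + by move=> i Hi; apply: gi; rewrite mem_iota.
  + by move=> i Hi; have := gx i; rewrite mem_iota add1n ltnS g0 xcoord0; apply.
- case=> gs g0 gi gx; apply/andP; split.
  + apply/and3P; split; [by rewrite gs | by rewrite g0 |].
    by apply/allP=> i; rewrite mem_iota add0n => /andP[_]; apply: gi.
  + by apply/allP=> i; rewrite mem_iota add1n ltnS g0 xcoord0; apply: gx.
Qed.

Lemma renewalP n g i : is_renewal n g i <->
  [/\ (0 < i)%N, (i < n)%N,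
      (forall k, (i < k <= n)%N -> xcoord (wpos g i) < xcoord (wpos g k)) &
      (forall k, (k < i)%N -> xcoord (wpos g k) <= xcoord (wpos g i))].
Proof.
rewrite /is_renewal; split.
- case/and4P=> i0 iN /allP ri /allP le; split => //.
  + by move=> k Hk; apply: ri; rewrite mem_iota addSn subnKC ?ltnS // ltnW.
  + by move=> k Hk; apply: le; rewrite mem_iota.
- case=> i0 iN ri le; apply/and4P; split => //.
  + apply/allP=> k; rewrite mem_iota addSn subnKC ?ltnS; last exact: ltnW.
    exact: ri.
  + by apply/allP=> k; rewrite mem_iota => /andP[_]; apply: le.
Qed.

Lemma bridge_wlen {n g} : is_bridge Omega n g -> wlen g = n.
Proof. by case/bridgeP=> gs _ _ _; rewrite /wlen gs. Qed.

Lemma bridge_headE {n g} : is_bridge Omega n g -> g = 0 :: behead g.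
Proof. by case/bridgeP; case: g => [|x g] //= _ <-. Qed.

Lemma bridge_origin : is_bridge Omega 0 [:: 0].
Proof. by apply/bridgeP; split => // i; lia. Qed.

Lemma bridge_xcoord {n g i} : is_bridge Omega n g -> (i <= n)%N ->
  0 <= xcoord (wpos g i) <= xcoord (wpos g n).
Proof.
case: i => [|i] /bridgeP[_ g0 _ gx] Hi; last by case/andP: (gx i.+1 Hi) => /ltW ->.
rewrite g0 xcoord0 lexx /=; case: n gx {Hi} => [|n] gx; first by rewrite g0 xcoord0.
by case/andP: (gx n.+1 (leqnn _)) => /ltW.
Qed.

Lemma size_cat_walk H w : size (cat_walk H w) = (size H + (size w).-1)%N.
Proof. by rewrite /cat_walk size_cat size_map size_behead. Qed.

Lemma wpos_cat_bridge_l {a H} w : is_bridge Omega a H -> forall i, (i <= a)%N ->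
  wpos (cat_walk H w) i = wpos H i.
Proof. by case/bridgeP=> Hs _ _ _ i Hi; rewrite /wpos /cat_walk nth_cat Hs ltnS Hi. Qed.

Lemma wpos_cat_bridge_r {a b H w} : is_bridge Omega a H -> is_bridge Omega b w ->
  forall j, (j <= b)%N -> wpos (cat_walk H w) (a + j) = wpos H a + wpos w j.
Proof.
case/bridgeP=> Hs _ _ _ /bridgeP[ws w0 _ _] j Hj.
have endH : last 0 H = wpos H a by rewrite -nth_last Hs.
rewrite /wpos /cat_walk nth_cat Hs; case: j Hj => [|j] Hj.
  by rewrite addn0 ltnSn; rewrite /wpos in w0; rewrite w0 addr0.
rewrite ltnNge addnS ltnS leq_addr /= subSS addKn (nth_map 0); last first.
  by rewrite size_behead ws.
by rewrite nth_behead endH.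
Qed.

Lemma bridge_cat_walk {a b H w} :
  is_bridge Omega a H -> is_bridge Omega b w -> is_bridge Omega (a + b) (cat_walk H w).
Proof.
move=> HH Hw; have PL := wpos_cat_bridge_l w HH; have PR := wpos_cat_bridge_r HH Hw.
have xH0 : 0 <= xcoord (wpos H a) by case/andP: (bridge_xcoord HH (leqnn a)).
move: (HH) (Hw) => /bridgeP[Hs H0 Hi Hx] /bridgeP[ws w0 wi wx].
apply/bridgeP; split.
- by rewrite size_cat_walk Hs ws.
- by rewrite PL.
- move=> i Hi'; case: (ltnP i a) => Hia; first by rewrite !PL ?Hi // ltnW.
  rewrite -(subnKC Hia) -addnS !PR; [|lia|lia].
  by rewrite [_ + wpos w _]addrC addrKA; apply: wi; lia.
- move=> i /andP[Hi0 Hib]; rewrite PR // xcoordD.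
  have /andP[xb0 _] := bridge_xcoord Hw (leqnn b).
  case: (leqP i a) => Hia.
    rewrite PL //; have /andP[? ?] : 0 < xcoord (wpos H i) <= xcoord (wpos H a).
      by apply: Hx; rewrite Hi0.
    apply/andP; split; lia.
  rewrite -(subnKC (ltnW Hia)) PR; last lia.
  have /andP[? ?] : 0 < xcoord (wpos w (i - a)) <= xcoord (wpos w b) by apply: wx; lia.
  rewrite xcoordD; apply/andP; split; lia.
Qed.

Lemma renewal_cat_walk {a b H w} : (0 < a)%N -> (0 < b)%N ->
  is_bridge Omega a H -> is_bridge Omega b w -> is_renewal (a + b) (cat_walk H w) a.
Proof.
move=> a0 b0 HH Hw; have PL := wpos_cat_bridge_l w HH; have PR := wpos_cat_bridge_r HH Hw.
case/bridgeP: (Hw) => _ _ _ wx.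
apply/renewalP; split => //; first lia.
- move=> k /andP[ak kab]; rewrite PL // -(subnKC (ltnW ak)) PR; last lia.
  have /andP[? _] : 0 < xcoord (wpos w (k - a)) <= xcoord (wpos w b) by apply: wx; lia.
  rewrite xcoordD; lia.
- move=> k Hk; rewrite !PL //; last exact: ltnW.
  by case/andP: (bridge_xcoord HH (ltnW Hk)).
Qed.

Lemma renewal_cat_walk_r {a b H w i} : (a < i)%N ->
  is_bridge Omega a H -> is_bridge Omega b w -> is_renewal (a + b) (cat_walk H w) i ->
  is_renewal b w (i - a).
Proof.
move=> ai HH Hw /renewalP[i0 ib ri le]; have PR := wpos_cat_bridge_r HH Hw.
have Ei : wpos (cat_walk H w) i = wpos H a + wpos w (i - a).
  by rewrite -PR ?subnKC //; [exact: ltnW | lia].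
apply/renewalP; split; [lia | lia | |].
- move=> k Hk; have := ri (a + k)%N ltac:(lia).
  by rewrite Ei PR ?xcoordD ?ltrD2l //; lia.
- move=> k Hk; have := le (a + k)%N ltac:(lia).
  by rewrite Ei PR ?xcoordD ?lerD2l //; lia.
Qed.

Definition walk_suffix i g : seq (pt d) := [seq v - wpos g i | v <- drop i g].

Lemma wpos_walk_suffix i j g : (i + j < size g)%N ->
  wpos (walk_suffix i g) j = wpos g (i + j) - wpos g i.
Proof.
by move=> Hij; rewrite /wpos (nth_map 0) ?nth_drop // size_drop ltn_subRL.
Qed.

Lemma cat_walk_take_suffix i g : (i < size g)%N ->
  cat_walk (take i.+1 g) (walk_suffix i g) = g.
Proof.
move=> Hi; rewrite /cat_walk /walk_suffix behead_map -drop1 drop_drop -map_comp.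
have -> : last 0 (take i.+1 g) = wpos g i by rewrite -nth_last size_takel // nth_take.
by rewrite (eq_map (g := id)) ?map_id ?cat_take_drop // => v /=; rewrite subrKC.
Qed.

Lemma bridge_take_renewal {n g i} : is_bridge Omega n g -> is_renewal n g i ->
  is_bridge Omega i (take i.+1 g).
Proof.
move=> /bridgeP[gs g0 gi gx] /renewalP[i0 iN _ le].
have PH k : (k <= i)%N -> wpos (take i.+1 g) k = wpos g k by move=> Hk; rewrite /wpos nth_take.
apply/bridgeP; split.
- by rewrite size_takel // gs; lia.
- by rewrite PH.
- by move=> k Hk; rewrite !PH ?gi //; lia.
- move=> k /andP[k0 ki]; rewrite !PH //.
  have /andP[-> _] : 0 < xcoord (wpos g k) <= xcoord (wpos g n) by apply: gx; lia.
  by case: (ltnP k i) => [/le //|ik] /=; have -> : k = i by lia.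
Qed.

Lemma bridge_walk_suffix {n g i} : is_bridge Omega n g -> is_renewal n g i ->
  is_bridge Omega (n - i) (walk_suffix i g).
Proof.
move=> /bridgeP[gs g0 gi gx] /renewalP[i0 iN ri _].
have Pw j : (j <= n - i)%N -> wpos (walk_suffix i g) j = wpos g (i + j) - wpos g i.
  by move=> Hj; rewrite wpos_walk_suffix // gs; lia.
apply/bridgeP; split.
- by rewrite size_map size_drop gs; lia.
- by rewrite Pw // addn0 subrr.
- move=> k Hk; rewrite !Pw; [|lia|lia].
  by rewrite opprB addrA subrK addnS; apply: gi; lia.
- move=> k /andP[k0 kn]; rewrite !Pw // !xcoordB subnKC; last exact: ltnW.
  have /andP[_ ?] : 0 < xcoord (wpos g (i + k)) <= xcoord (wpos g n) by apply: gx; lia.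
  have ? : xcoord (wpos g i) < xcoord (wpos g (i + k)) by apply: ri; lia.
  by rewrite subr_gt0 lerD2r; apply/andP.
Qed.

Lemma renewal_walk_suffix {n g i j} : is_bridge Omega n g -> is_renewal n g i ->
  is_renewal (n - i) (walk_suffix i g) j -> is_renewal n g (i + j).
Proof.
move=> /bridgeP[gs _ _ _] /renewalP[i0 iN ri le] /renewalP[j0 jn sj lej].
have Pw k : (k <= n - i)%N -> wpos (walk_suffix i g) k = wpos g (i + k) - wpos g i.
  by move=> Hk; rewrite wpos_walk_suffix // gs; lia.
have xj : xcoord (wpos g i) <= xcoord (wpos g (i + j)).
  by apply/ltW/ri; lia.
apply/renewalP; split; [lia | lia | |].
- move=> k Hk; have := sj (k - i)%N ltac:(lia).
  by rewrite !Pw ?subnKC ?xcoordB ?ltrD2r //; lia.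
- move=> k Hk; case: (ltnP k i) => Hki; first exact: le_trans (le k Hki) xj.
  have := lej (k - i)%N ltac:(lia).
  by rewrite !Pw ?subnKC ?xcoordB ?lerD2r //; lia.
Qed.

End Bridges.

Section Decomposition.
Context {d : nat} {Omega : seq (pt d)}.
Implicit Types (g w : seq (pt d)) (ws : seq (seq (pt d))).

Definition cat_walks ws : seq (pt d) := foldl cat_walk [:: 0] ws.
Definition sum_wlen ws : nat := sumn (map wlen ws).

Lemma irr_bridgeP g : is_irr_bridge Omega g ->
  [/\ (0 < wlen g)%N, is_bridge Omega (wlen g) g &
      forall i, (0 < i < wlen g)%N -> ~~ is_renewal (wlen g) g i].
Proof.
case/and3P=> g0 gb /hasPn nr; split => // i Hi; apply: nr.
by rewrite mem_iota; lia.
Qed.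

Lemma cat_walks_rcons ws w : cat_walks (rcons ws w) = cat_walk (cat_walks ws) w.
Proof. by rewrite /cat_walks foldl_rcons. Qed.

Lemma sum_wlen_rcons ws w : sum_wlen (rcons ws w) = (sum_wlen ws + wlen w)%N.
Proof. by rewrite /sum_wlen map_rcons sumn_rcons. Qed.

Lemma size_cat_walks ws : size (cat_walks ws) = (sum_wlen ws).+1.
Proof.
elim/last_ind: ws => [//|ws w IH].
by rewrite cat_walks_rcons size_cat_walk IH sum_wlen_rcons.
Qed.

Lemma wlen_cat_walks ws : wlen (cat_walks ws) = sum_wlen ws.
Proof. by rewrite /wlen size_cat_walks. Qed.

Lemma bridge_cat_walks {ws} : all (is_irr_bridge Omega) ws ->
  is_bridge Omega (sum_wlen ws) (cat_walks ws).
Proof.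
elim/last_ind: ws => [_|ws w IH]; first exact: bridge_origin.
rewrite all_rcons sum_wlen_rcons cat_walks_rcons => /andP[/irr_bridgeP[_ Hw _] /IH].
by move/bridge_cat_walk; apply.
Qed.

(* The junction [sum_wlen vs'] is a renewal time of the common walk; lying
   beyond [sum_wlen vs] it would be a renewal time of the irreducible [w]. *)
Lemma cat_walks_junction_le {vs w vs' w'} :
  all (is_irr_bridge Omega) vs -> is_irr_bridge Omega w ->
  all (is_irr_bridge Omega) vs' -> is_irr_bridge Omega w' ->
  cat_walk (cat_walks vs) w = cat_walk (cat_walks vs') w' -> (sum_wlen vs' <= sum_wlen vs)%N.
Proof.
move=> Hvs /irr_bridgeP[b0 Hw nrw] Hvs' /irr_bridgeP[b0' Hw' _] E.
rewrite leqNgt; apply/negP => lt_vs.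
have Es : (sum_wlen vs + wlen w = sum_wlen vs' + wlen w')%N.
  by have := congr1 size E; rewrite !size_cat_walk !size_cat_walks /wlen; lia.
have := renewal_cat_walk (leq_ltn_trans (leq0n _) lt_vs) b0'
  (bridge_cat_walks Hvs') Hw'.
rewrite -E -Es => /(renewal_cat_walk_r lt_vs (bridge_cat_walks Hvs) Hw).
by apply/negP/nrw; lia.
Qed.

Lemma cat_walks_inj {ws ws'} : all (is_irr_bridge Omega) ws ->
  all (is_irr_bridge Omega) ws' -> cat_walks ws = cat_walks ws' -> ws = ws'.
Proof.
have nil_len vs w : is_irr_bridge Omega w -> cat_walks [::] <> cat_walks (rcons vs w).
  case/irr_bridgeP=> w0 _ _ /(congr1 size) /=.
  by rewrite size_cat_walks sum_wlen_rcons; lia.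
elim/last_ind: ws ws' => [|vs w IH] [|v' vs'] //; rewrite ?lastI ?all_rcons.
- by move=> _ /andP[Hw _] /(nil_len _ _ Hw).
- by move=> /andP[Hw _] _ /esym /(nil_len _ _ Hw).
case/andP=> Hw Hvs /andP[Hw' Hvs']; rewrite !cat_walks_rcons => E.
have Ea : sum_wlen vs = sum_wlen (belast v' vs').
  by apply/eqP; rewrite eqn_leq (cat_walks_junction_le Hvs Hw Hvs' Hw' E)
       (cat_walks_junction_le Hvs' Hw' Hvs Hw (esym E)).
have Ec : cat_walks vs = cat_walks (belast v' vs').
  have := congr1 (take (sum_wlen vs).+1) E.
  by rewrite /cat_walk !take_size_cat // !size_cat_walks Ea.
rewrite (IH _ Hvs Hvs' Ec); congr rcons.
have := congr1 (drop (sum_wlen vs).+1) E.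
rewrite /cat_walk !drop_size_cat ?size_cat_walks ?Ea // Ec => /inj_map behead_eq.
case/irr_bridgeP: Hw => _ /bridge_headE -> _; case/irr_bridgeP: Hw' => _ /bridge_headE -> _.
by rewrite behead_eq // => x y; apply: addrI.
Qed.

(* Cutting at the last renewal time leaves an irreducible final piece. *)
Lemma irr_decomp_exists {n g} : (0 < n)%N -> is_bridge Omega n g ->
  exists2 ws, all (is_irr_bridge Omega) ws & cat_walks ws = g.
Proof.
elim/ltn_ind: n g => n IH g n0 Hg.
case: (boolP (has (is_renewal n g) (iota 1 n))) => [hr|nr]; last first.
  exists [:: g]; first by rewrite /= andbT /is_irr_bridge (bridge_wlen Hg) n0 Hg nr.
  rewrite /cat_walks /= /cat_walk /= {2}(bridge_headE Hg) map_id_in // => v _.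
  exact: add0r.
have exr : exists i, is_renewal n g i by case/hasP: hr => i _; exists i.
have ubr i : is_renewal n g i -> (i <= n)%N by case/renewalP=> _ /ltnW.
case: (ex_maxnP exr ubr) => i ri imax.
case/renewalP: (ri) => i0 iN _ _; case/bridgeP: (Hg) => gs _ _ _.
have [ws Hws Ews] := IH i iN _ i0 (bridge_take_renewal Hg ri).
have Hsuf := bridge_walk_suffix Hg ri.
exists (rcons ws (walk_suffix i g)); last first.
  by rewrite cat_walks_rcons Ews cat_walk_take_suffix // gs ltnS ltnW.
rewrite all_rcons Hws andbT /is_irr_bridge (bridge_wlen Hsuf) Hsuf subn_gt0 iN /=.
apply/hasPn => j; rewrite mem_iota => Hj; apply/negP => /(renewal_walk_suffix Hg ri).
by move/imax; lia.
Qed.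

End Decomposition.

Section Weights.
Context {R : realType} {d : nat} {Omega : seq (pt d)} {phi : nat -> R} {rho : pt d -> R}.
Hypothesis phi1 : phi 1%N = 0.
Implicit Types (g H w : seq (pt d)).

Let site_weight g : R := \prod_(v <- undup g) expR (- phi (ltime g v)).
Let step_weight g : R := \prod_(i < wlen g) rho (wpos g i.+1 - wpos g i).

Lemma step_weight_cat {a b H w} : is_bridge Omega a H -> is_bridge Omega b w ->
  step_weight (cat_walk H w) = step_weight H * step_weight w.
Proof.
move=> HH Hw; have PL := wpos_cat_bridge_l w HH; have PR := wpos_cat_bridge_r HH Hw.
rewrite /step_weight (bridge_wlen (bridge_cat_walk HH Hw)) (bridge_wlen HH) (bridge_wlen Hw).
rewrite big_split_ord; congr (_ * _); apply: eq_bigr => i _.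
  by rewrite (PL i.+1 (ltn_ord i)) (PL i (ltnW (ltn_ord i))).
rewrite -addnS (PR i.+1 (ltn_ord i)) (PR i (ltnW (ltn_ord i))).
by rewrite [_ + wpos w _]addrC addrKA.
Qed.

(* The part of [w] after its start lies strictly to the right of [H], so the
   two ranges are disjoint; the start of [w] is visited once, and [phi 1 = 0]. *)
Lemma site_weight_cat {a b H w} : is_bridge Omega a H -> is_bridge Omega b w ->
  site_weight (cat_walk H w) = site_weight H * site_weight w.
Proof.
move=> HH Hw; case/bridgeP: (HH) => Hs _ _ _; case/bridgeP: (Hw) => ws _ _ wx.
set c := last 0 H; set s := behead w; set shifted := [seq c + v | v <- s].
have xH v : v \in H -> xcoord v <= xcoord c.
  move=> /(nthP 0)[k Hk <-]; rewrite /c -nth_last Hs /=.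
  have ka : (k <= a)%N by rewrite -ltnS -Hs.
  by case/andP: (bridge_xcoord HH ka).
have xs u : u \in s -> 0 < xcoord u.
  move=> /(nthP 0)[j Hj <-]; rewrite nth_behead.
  have jb : (0 < j.+1 <= b)%N by move: Hj; rewrite size_behead ws.
  by case/andP: (wx j.+1 jb).
have disj v : v \in H -> v \notin shifted.
  move=> vH; apply/mapP => -[u us Ev]; have := xH v vH.
  by rewrite Ev xcoordD gerDl leNgt xs.
have s0 : 0 \notin s by apply/negP => /xs; rewrite xcoord0 ltxx.
rewrite /site_weight /cat_walk -/s -/shifted undup_cat big_cat /=.
have -> : [seq x <- undup H | x \notin shifted] = undup H.
  by apply/all_filterP/allP => v; rewrite mem_undup; apply: disj.
congr (_ * _).
  apply: eq_big_seq => v; rewrite mem_undup => vH.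
  by rewrite /ltime count_cat (count_memPn (disj v vH)) addn0.
rewrite /shifted undup_map_inj; last exact: addrI.
rewrite big_map (bridge_headE Hw) /= (negbTE s0) big_cons /ltime /= eqxx.
rewrite (count_memPn s0) phi1 oppr0 expR0 mul1r.
apply: eq_big_seq => u; rewrite mem_undup => us.
have nH : c + u \notin H by apply: contraTN (map_f (fun v => c + v) us) => /disj.
rewrite count_cat (count_memPn nH) count_map.
have -> : (0 == u) = false by apply/negP => /eqP u0; rewrite u0 us in s0.
by rewrite !add0n; congr (expR (- phi _)); apply: eq_count => x /=; rewrite inj_eq //; apply: addrI.
Qed.

Lemma sigma_cat_walk {a b H w} : is_bridge Omega a H -> is_bridge Omega b w ->
  sigma phi rho (cat_walk H w) = sigma phi rho H * sigma phi rho w.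
Proof.
move=> HH Hw; rewrite /sigma -/(site_weight _) -/(step_weight _).
by rewrite (site_weight_cat HH Hw) (step_weight_cat HH Hw) mulrACA.
Qed.

Lemma sigma_origin : sigma phi rho [:: 0] = 1.
Proof.
by rewrite /sigma /= big_seq1 big_ord0 /ltime /= eqxx phi1 oppr0 expR0 mulr1.
Qed.

Lemma sigma_cat_walks {ws} : all (is_irr_bridge Omega) ws ->
  sigma phi rho (cat_walks ws) = \prod_(w <- ws) sigma phi rho w.
Proof.
elim/last_ind: ws => [_|ws w IH]; first by rewrite big_nil sigma_origin.
rewrite all_rcons => /andP[/irr_bridgeP[_ Hw _] Hws].
rewrite cat_walks_rcons (sigma_cat_walk (bridge_cat_walks Hws) Hw) IH //.
by rewrite -cats1 big_cat big_seq1.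
Qed.

End Weights.

Section WalkEnumeration.
Context {d : nat} {Omega : seq (pt d)}.

Lemma mem_incr_seqs n (s : seq (pt d)) :
  (s \in incr_seqs Omega n) = (size s == n) && all (mem Omega) s.
Proof.
elim: n s => [|n IH] [|v s] /=; [by rewrite inE | by rewrite inE | |].
  by apply/allpairsPdep => -[x [y [_ _]]].
apply/allpairsPdep/idP.
- case=> x [y [Hx Hy [-> ->]]]; move: Hx Hy; rewrite mem_undup IH => -> /=.
  by rewrite eqSS.
- case/andP=> Hs /andP[Hv Ha]; exists v, s; split => //; first by rewrite mem_undup.
  by rewrite IH -eqSS Hs Ha.
Qed.

Lemma uniq_incr_seqs n : uniq (incr_seqs Omega n).
Proof.
elim: n => [//|n IH] /=; apply: allpairs_uniq => //; first exact: undup_uniq.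
by move=> [x y] [x' y'] _ _ /= [-> ->].
Qed.

Lemma walk_of_inj : injective (@walk_of d).
Proof.
move=> s t [] /(can_inj (scanlK (f := fun x y : pt d => y - x) (g := +%R) _ 0)).
by apply => x y /=; rewrite addrC addKr.
Qed.

Lemma uniq_Wn n : uniq (Wn Omega n).
Proof. by rewrite map_inj_uniq ?uniq_incr_seqs //; exact: walk_of_inj. Qed.

Lemma mem_Wn_bridge {n g} : is_bridge Omega n g -> g \in Wn Omega n.
Proof.
move=> Hg; have Eg := bridge_headE Hg; case/bridgeP: Hg => gs _ gi _.
set p := pairmap (fun x y : pt d => y - x) 0 (behead g).
have -> : g = walk_of p by rewrite Eg /walk_of /p pairmapK // => x y /=; exact: subrKC.
have sp : size p = n by rewrite size_pairmap size_behead gs.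
apply: map_f; rewrite mem_incr_seqs sp eqxx /=.
apply/(all_nthP 0) => i; rewrite sp => Hi; rewrite (nth_pairmap 0) ?size_behead ?gs //.
by have := gi i Hi; rewrite /wpos Eg /=; case: i {Hi}.
Qed.

End WalkEnumeration.

Lemma mkseq_eq {A : Type} (x0 : A) {f : nat -> A} {s : seq A} {k} :
  size s = k -> (forall j, (j < k)%N -> f j = nth x0 s j) -> mkseq f k = s.
Proof.
move=> sk Ef; rewrite -[RHS](mkseq_nth x0) sk /mkseq; apply/eq_in_map => j.
by rewrite mem_iota => /andP[_ jk]; exact: Ef.
Qed.

Lemma sum_pos_ge_card (f : nat -> nat) k : (forall j, (j < k)%N -> (0 < f j)%N) ->
  (k <= \sum_(j < k) f j)%N.
Proof.
move=> f_pos; rewrite -[X in (X <= _)%N]card_ord -sum1_card.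
by apply: leq_sum => j _; exact: f_pos.
Qed.

Lemma leq_sum_ord_widen (f : nat -> nat) {m k} : (m <= k)%N ->
  (\sum_(j < m) f j <= \sum_(j < k) f j)%N.
Proof. by move=> mk; rewrite (big_ord_widen k) //; apply: sub_le_big => // *; exact: leq_addr. Qed.

Section PrefixWalks.
Context {d : nat}.
Implicit Types (w : nat -> seq (pt d)).

Lemma prefix_walkS w k : prefix_walk w k.+1 = cat_walk (prefix_walk w k) (w k).
Proof. by rewrite /prefix_walk mkseqS; exact: cat_walks_rcons. Qed.

Lemma prefix_walk_extends w {i j} : (i <= j)%N ->
  exists s, prefix_walk w j = prefix_walk w i ++ s.
Proof.
move=> /subnK <-; elim: (j - i)%N => [|k [s IH]]; first by exists [::]; rewrite cats0.
by rewrite addSn prefix_walkS /cat_walk IH -catA; eexists.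
Qed.

Lemma sum_wlen_mkseq w k : sum_wlen (mkseq w k) = (\sum_(j < k) wlen (w j))%N.
Proof.
rewrite /sum_wlen sumnE /mkseq !big_map.
have -> : iota 0 k = index_iota 0 k by rewrite /index_iota subn0.
by rewrite big_mkord.
Qed.

Lemma size_prefix_walk w k : size (prefix_walk w k) = (\sum_(j < k) wlen (w j)).+1%N.
Proof. by rewrite size_cat_walks sum_wlen_mkseq. Qed.

(* [inf_walk w i] reads position [i] of the concatenation of the first [i]
   pieces, which is long enough because pieces have positive length. *)
Lemma inf_walk_prefix_walk w k i : (forall j, (j < k)%N -> (0 < wlen (w j))%N) ->
  (i <= \sum_(j < k) wlen (w j))%N -> inf_walk w i = nth 0 (prefix_walk w k) i.
Proof.
move=> w_pos ik; rewrite /inf_walk; case: (leqP i k) => [le_ik|lt_ki].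
  have [s ->] := prefix_walk_extends w le_ik.
  rewrite nth_cat size_prefix_walk ltnS.
  suff -> : (i <= \sum_(j < i) wlen (w j))%N by [].
  by apply: (sum_pos_ge_card (wlen \o w)) => j ji; exact/w_pos/(leq_trans ji).
have [s ->] := prefix_walk_extends w (ltnW lt_ki).
by rewrite nth_cat size_prefix_walk ltnS ik.
Qed.

Lemma mkseq_inf_walk w k : (forall j, (j < k)%N -> (0 < wlen (w j))%N) ->
  mkseq (inf_walk w) (\sum_(j < k) wlen (w j)).+1 = prefix_walk w k.
Proof.
move=> w_pos; apply: (mkseq_eq 0); first by rewrite size_prefix_walk.
by move=> i; rewrite ltnS; exact: inf_walk_prefix_walk.
Qed.

Lemma eq_inf_walk {w w' n i} : (i <= n)%N -> (forall j, (j < n)%N -> w j = w' j) ->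
  inf_walk w i = inf_walk w' i.
Proof.
move=> i_n ww'; rewrite /inf_walk /prefix_walk; congr (nth 0 (foldl _ _ _) _).
apply/eq_in_map => j; rewrite mem_iota => /andP[_ ji]; apply: ww'.
exact: leq_trans ji i_n.
Qed.

End PrefixWalks.

Section MeasureFacts.
Context {dT : measure_display} {T : measurableType dT} {R : realType}
  (mu : {measure set T -> \bar R}).

Lemma measure_eq_up_to_null {U S N : set T} :
  measurable U -> measurable S -> measurable N -> mu N = 0 ->
  U `<=` S -> S `<=` U `|` N -> mu S = mu U.
Proof.
move=> mU mS mN N0 US SUN; apply/eqP; rewrite eq_le; apply/andP; split.
  rewrite -(measureU0 mU mN N0); apply: le_measure SUN; rewrite inE //.
  exact: measurableU.
by apply: le_measure US; rewrite inE.
Qed.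

Lemma measure_bigsetU_seq {I : choiceType} (s : seq I) (p : pred I) (D : I -> set T) :
  uniq s -> (forall i, measurable (D i)) ->
  (forall i j t, p i -> p j -> D i t -> D j t -> i = j) ->
  mu (\big[setU/set0]_(i <- s | p i) D i) = \sum_(i <- s | p i) mu (D i).
Proof.
move=> + mD disj; elim: s => [_|i s IH] /=; first by rewrite !big_nil measure0.
case/andP=> i_s us; rewrite !big_cons; case: ifP => pi; last exact: IH.
have mU : measurable (\big[setU/set0]_(j <- s | p j) D j) by exact: bigsetU_measurable.
rewrite (measureU mu (mD i) mU); first by congr (_ + _); exact: IH.
rewrite -bigcup_seq_cond; apply/seteqP; split => // t [Dit [j /andP[js pj] Djt]].
by move: i_s; rewrite (disj _ _ _ pi pj Dit Djt) js.
Qed.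

End MeasureFacts.

Section Cylinders.
Context {d : nat} {R : realType} {dT : measure_display} {T : measurableType dT}
  (X : nat -> T -> seq (pt d)).
Hypothesis measurable_X : forall j w, measurable [set t | X j t = w].

Definition cylinder k (u : nat -> seq (pt d)) : set T :=
  [set t | forall j, (j < k)%N -> X j t = u j].

Definition prefix_event k (Q : pred (seq (seq (pt d)))) : set T :=
  [set t | Q (mkseq (X^~ t) k)].

Lemma measurable_cylinder k u : measurable (cylinder k u).
Proof.
elim: k => [|k IH].
  by rewrite [cylinder 0 u](_ : _ = setT) //; apply/seteqP; split.
rewrite [cylinder _ u](_ : _ = cylinder k u `&` [set t | X k t = u k]).
  exact: measurableI.
apply/seteqP; split => t /=.
  by move=> Xu; split => [j jk|]; apply: Xu => //; exact: leqW.
by case=> Xu Xk j; rewrite ltnS leq_eqVlt => /orP[/eqP ->|/Xu].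
Qed.

(* Prefix events are countable unions of cylinders, indexed through [unpickle]. *)
Let coded_cylinder k Q (m : nat) : set T :=
  if unpickle m is Some u then
    if Q u && (size u == k) then cylinder k (nth [::] u) else set0
  else set0.

Let prefix_event_bigcup k Q : prefix_event k Q = \bigcup_m coded_cylinder k Q m.
Proof.
apply/seteqP; split => t /=.
  move=> Qt; exists (pickle (mkseq (X^~ t) k)) => //.
  rewrite /coded_cylinder pickleK Qt size_mkseq eqxx => j jk.
  by rewrite nth_mkseq.
case=> m _; rewrite /coded_cylinder; case: unpickle => [u|] //.
case: ifP => // /andP[Qu /eqP su] Ct.
by rewrite /prefix_event /= (mkseq_eq [::] su Ct).
Qed.

Let measurable_coded_cylinder k Q m : measurable (coded_cylinder k Q m).
Proof.
rewrite /coded_cylinder; case: unpickle => [u|] //.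
by case: ifP => _ //; exact: measurable_cylinder.
Qed.

Lemma measurable_prefix_event k Q : measurable (prefix_event k Q).
Proof.
by rewrite prefix_event_bigcup; apply: bigcupT_measurable => m; exact: measurable_coded_cylinder.
Qed.

Lemma prefix_event_null (mu : {measure set T -> \bar R}) k (Q : pred (seq (seq (pt d)))) :
  (forall u, Q u -> size u = k -> mu (cylinder k (nth [::] u)) = 0) ->
  mu (prefix_event k Q) = 0.
Proof.
move=> cyl0; apply/(negligibleP _ (measurable_prefix_event k Q)).
rewrite prefix_event_bigcup; apply: negligible_bigcup => m.
exists (coded_cylinder k Q m); split => //; rewrite /coded_cylinder.
case: unpickle => [u|]; last exact: measure0.
by case: ifP => [/andP[Qu /eqP]|_]; [exact: cyl0 | exact: measure0].
Qed.

End Cylinders.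

Definition irr_decomp_of {d : nat} (Omega : seq (pt d)) (g : seq (pt d))
    (ws : seq (seq (pt d))) : bool :=
  all (is_irr_bridge Omega) ws && (cat_walks ws == g).

Definition irr_decomp {d : nat} (Omega : seq (pt d)) (g : seq (pt d)) : seq (seq (pt d)) :=
  if pselect (exists ws, irr_decomp_of Omega g ws) is left ex then xchoose ex else [::].

Section IrreducibleDecomposition.
Context {d : nat} {Omega : seq (pt d)}.

Lemma irr_decomp_cat_walks ws : all (is_irr_bridge Omega) ws ->
  irr_decomp Omega (cat_walks ws) = ws.
Proof.
move=> Hws; rewrite /irr_decomp; case: pselect => [ex|[]].
  by case/andP: (xchooseP ex) => Hd /eqP /(cat_walks_inj Hd Hws).
by exists ws; rewrite /irr_decomp_of Hws eqxx.
Qed.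

Lemma irr_decompP {n g} : (0 < n)%N -> is_bridge Omega n g ->
  all (is_irr_bridge Omega) (irr_decomp Omega g) /\ cat_walks (irr_decomp Omega g) = g.
Proof. by move=> n0 /(irr_decomp_exists n0)[ws Hws <-]; rewrite irr_decomp_cat_walks. Qed.

End IrreducibleDecomposition.

Section RenewalEvents.
Context {R : realType} {d : nat} {Omega : seq (pt d)} {phi : nat -> R} {rho : pt d -> R}
  {dT : measure_display} {T : measurableType dT} {P : probability T R}
  {X : nat -> T -> seq (pt d)} {n : nat}.
Hypothesis phi1 : phi 1%N = 0.
Hypothesis measurable_X : forall j w, measurable [set t | X j t = w].
Hypothesis law_X : forall k w,
  P (cylinder X k w) = (\prod_(j < k) PiB phi rho Omega (w j))%:E.
Hypothesis n_gt0 : (0 < n)%N.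

Let decomp_cylinder g : set T :=
  cylinder X (size (irr_decomp Omega g)) (nth [::] (irr_decomp Omega g)).

Let measurable_decomp_cylinder g : measurable (decomp_cylinder g).
Proof. exact: measurable_cylinder. Qed.

Lemma decomp_cylinder_renewal {g t} : is_bridge Omega n g -> decomp_cylinder g t ->
  renewal_set (X^~ t) n /\ mkseq (inf_walk (X^~ t)) n.+1 = g.
Proof.
move=> Hg Ct; have [Hd Eg] := irr_decompP n_gt0 Hg.
move: Ct; rewrite /decomp_cylinder; set ws := irr_decomp Omega g in Hd Eg * => Ct.
have Ews : mkseq (X^~ t) (size ws) = ws := mkseq_eq [::] erefl Ct.
have posX j : (j < size ws)%N -> (0 < wlen (X j t))%N.
  by move=> jw; rewrite Ct //; case/irr_bridgeP: (allP Hd _ (mem_nth [::] jw)).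
have Esum : (\sum_(j < size ws) wlen (X j t))%N = n.
  by rewrite -(sum_wlen_mkseq (X^~ t)) Ews -wlen_cat_walks Eg (bridge_wlen Hg).
split; last by rewrite -Esum mkseq_inf_walk // /prefix_walk Ews.
exists (size ws); split => //; rewrite lt0n; apply/eqP => ws0.
by move: n_gt0; rewrite -Esum ws0 big_ord0.
Qed.

(* As every piece has positive length, the renewal time [n] is reached after
   at most [n] pieces, all of which are irreducible off the null event. *)
Lemma renewal_decomp_cylinder {t} : renewal_set (X^~ t) n ->
  all (is_irr_bridge Omega) (mkseq (X^~ t) n) ->
  is_bridge Omega n (mkseq (inf_walk (X^~ t)) n.+1) /\
  decomp_cylinder (mkseq (inf_walk (X^~ t)) n.+1) t.
Proof.
move=> [k [k0 nE]] /(all_nthP [::]); rewrite size_mkseq => irr_t.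
have irrX j : (j < n)%N -> is_irr_bridge Omega (X j t).
  by move=> jn; have := irr_t j jn; rewrite nth_mkseq.
have posX j : (j < n)%N -> (0 < wlen (X j t))%N by move/irrX/irr_bridgeP => [].
have [k' [k'n nE']] : exists k', (k' <= n)%N /\ n = (\sum_(j < k') wlen (X j t))%N.
  case: (leqP k n) => kn; first by exists k.
  have := leq_sum_ord_widen (fun j => wlen (X j t)) (ltnW kn); rewrite -nE => le_sum.
  exists n; split => //; apply/eqP; rewrite eqn_leq le_sum andbT.
  exact: (sum_pos_ge_card (fun j => wlen (X j t))).
set ws := mkseq (X^~ t) k'.
have Hws : all (is_irr_bridge Omega) ws.
  by apply/allP => w /mapP[j]; rewrite mem_iota => /andP[_ jk] ->; apply/irrX/(leq_trans jk).
have -> : mkseq (inf_walk (X^~ t)) n.+1 = cat_walks ws.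
  by rewrite [in LHS]nE' mkseq_inf_walk // => j jk; apply/posX/(leq_trans jk).
split; first by have := bridge_cat_walks Hws; rewrite sum_wlen_mkseq -nE'.
by rewrite /decomp_cylinder irr_decomp_cat_walks // size_mkseq => j jk; rewrite nth_mkseq.
Qed.

Lemma measure_decomp_cylinder g : is_bridge Omega n g ->
  P (decomp_cylinder g) = (sigma phi rho g * expR (- lambda0 phi rho Omega * n%:R))%:E.
Proof.
move=> Hg; have [Hd Eg] := irr_decompP n_gt0 Hg.
rewrite /decomp_cylinder law_X; congr EFin; set ws := irr_decomp Omega g in Hd Eg *.
rewrite -(big_mkord xpredT (fun j => PiB phi rho Omega (nth [::] ws j))) -(big_nth [::] xpredT).
rewrite (eq_big_seq (fun w => sigma phi rho w * expR (- lambda0 phi rho Omega * (wlen w)%:R))).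
  rewrite big_split /= -(sigma_cat_walks phi1 Hd) Eg -expR_sum -mulr_sumr -natr_sum.
  by rewrite -(bridge_wlen Hg) -Eg wlen_cat_walks /sum_wlen sumnE big_map.
by move=> w /(allP Hd) irr_w; rewrite /PiB irr_w.
Qed.

Let not_irr_event := prefix_event X n (fun u => ~~ all (is_irr_bridge Omega) u).

Let measure_not_irr_event : P not_irr_event = 0.
Proof.
apply: (prefix_event_null _ measurable_X) => u.
rewrite -has_predC => /(has_nthP [::])[j ju not_irr] su; rewrite su in ju.
apply: eq_trans (law_X n (nth [::] u)) _.
by rewrite (bigD1 (Ordinal ju)) //= /PiB (negbTE not_irr) mul0r.
Qed.

Let measurable_renewal_event : measurable [set t | renewal_set (X^~ t) n].
Proof.
rewrite [E in measurable E](_ : _ =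
    \bigcup_k prefix_event X k (fun u => (0 < k)%N && (sum_wlen u == n))).
  by apply: bigcupT_measurable => k; exact: measurable_prefix_event.
apply/seteqP; split => t /= [k].
  by case=> k0 nE; exists k => //; rewrite /prefix_event /= k0 sum_wlen_mkseq -nE eqxx.
by move=> _ /andP[k0 /eqP nE]; exists k; rewrite -nE sum_wlen_mkseq.
Qed.

Let measurable_prefix_walk_event (A : pred (seq (pt d))) :
  measurable [set t | A (mkseq (inf_walk (X^~ t)) n.+1)].
Proof.
rewrite [E in measurable E](_ : _ = prefix_event X n
    (fun u => A (mkseq (inf_walk (nth [::] u)) n.+1))).
  exact: measurable_prefix_event.
have walkE t : mkseq (inf_walk (nth [::] (mkseq (X^~ t) n))) n.+1 =
    mkseq (inf_walk (X^~ t)) n.+1.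
  apply/eq_in_map => i; rewrite mem_iota ltnS => /andP[_ i_n].
  by apply: (eq_inf_walk i_n) => j jn; rewrite nth_mkseq.
by apply/seteqP; split => t; rewrite /prefix_event /= walkE.
Qed.

Lemma measure_prefix_walk_renewal (A : pred (seq (pt d))) :
  P ([set t | A (mkseq (inf_walk (X^~ t)) n.+1)] `&` [set t | renewal_set (X^~ t) n]) =
  ((\sum_(g <- Wn Omega n | is_bridge Omega n g && A g) sigma phi rho g) *
    expR (- lambda0 phi rho Omega * n%:R))%:E.
Proof.
set U := \big[setU/set0]_(g <- Wn Omega n | is_bridge Omega n g && A g) decomp_cylinder g.
have mU : measurable U by apply: bigsetU_measurable => g _; exact: measurable_decomp_cylinder.
rewrite (measure_eq_up_to_null P mU _ _ measure_not_irr_event).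
- rewrite measure_bigsetU_seq ?uniq_Wn // => [|g g' t /andP[Hg _] /andP[Hg' _] Ct C't].
    rewrite mulr_suml -sumEFin; apply: eq_bigr => g /andP[Hg _].
    exact: measure_decomp_cylinder.
  by rewrite -(decomp_cylinder_renewal Hg Ct).2 -(decomp_cylinder_renewal Hg' C't).2.
- exact: measurableI.
- exact: measurable_prefix_event.
- rewrite /U -bigcup_seq_cond => t [g /and3P[_ Hg Ag] Ct].
  by have [? Eg] := decomp_cylinder_renewal Hg Ct; split => //=; rewrite Eg.
- move=> t [At Et]; case: (boolP (all (is_irr_bridge Omega) (mkseq (X^~ t) n))); last by right.
  move=> irr_t; left; have [Hg Ct] := renewal_decomp_cylinder Et irr_t.
  rewrite /U -bigcup_seq_cond; exists (mkseq (inf_walk (X^~ t)) n.+1) => //.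
  by rewrite /= (mem_Wn_bridge Hg) Hg.
Qed.

Lemma measure_renewal :
  P [set t | renewal_set (X^~ t) n] =
  ((\sum_(g <- Wn Omega n | is_bridge Omega n g) sigma phi rho g) *
    expR (- lambda0 phi rho Omega * n%:R))%:E.
Proof.
rewrite -[E in P E]setTI.
have -> : [set: T] = [set t | predT (mkseq (inf_walk (X^~ t)) n.+1)] by apply/seteqP; split.
rewrite measure_prefix_walk_renewal; congr ((_ * _)%:E).
by apply: eq_bigl => g; rewrite andbT.
Qed.

End RenewalEvents.

Theorem lemma7 (R : realType) (d : nat) (Omega : seq (pt d))
  (phi : nat -> R) (rho : pt d -> R)
  (HOmega0 : 0 \notin Omega)
  (HOmega_sym : forall (s : {perm 'I_(d.+1)}) (e : 'I_(d.+1) -> bool) (v : pt d),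
      v \in Omega -> sym_apply s e v \in Omega)
  (Hphi_ge0 : forall a : nat, 0 <= phi a)
  (Hphi0 : phi 0%N = 0) (Hphi1 : phi 1%N = 0)
  (Hphi_sup : forall a b : nat, phi a + phi b <= phi (a + b)%N)
  (Hrho_ge0 : forall v, v \in Omega -> 0 <= rho v)
  (Hrho_sum : \sum_(v <- undup Omega) rho v = 1)
  (Hrho_sym : forall (s : {perm 'I_(d.+1)}) (e : 'I_(d.+1) -> bool) (v : pt d),
      v \in Omega -> rho (sym_apply s e v) = rho v)
  (* gamma_1, gamma_2, ... (here X 0, X 1, ...) i.i.d. with law P_iB *)
  (dT : measure_display) (T : measurableType dT) (P : probability T R)
  (X : nat -> T -> seq (pt d))
  (HXmeas : forall (j : nat) (w : seq (pt d)), measurable [set t | X j t = w])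
  (HXlaw : forall (k : nat) (w : nat -> seq (pt d)),
      P [set t | forall j : nat, (j < k)%N -> X j t = w j] =
      (\prod_(j < k) PiB phi rho Omega (w j))%:E)
  (n : nat) (Hn : (0 < n)%N) (A : pred (seq (pt d)))
  (HA : forall g, A g -> is_bridge Omega n g) :
  PBn phi rho Omega n A =
  condprob P
    [set t | A (mkseq (inf_walk (fun j => X j t)) n.+1)]
    [set t | renewal_set (fun j => X j t) n].
Proof.
(* Only [Hphi1] and the law of the pieces are needed: the other conditions on
   [Omega], [phi] and [rho] are the paper's standing assumptions, and [HA] is
   redundant because [PBn] already sums over bridges only. *)
rewrite /condprob (measure_prefix_walk_renewal Hphi1 HXmeas HXlaw Hn).
rewrite (measure_renewal Hphi1 HXmeas HXlaw Hn) /= /PBn.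
have e_neq0 : expR (- lambda0 phi rho Omega * n%:R) != 0 by rewrite gt_eqF ?expR_gt0.
by rewrite invfM mulrACA divff // mulr1.
Qed.
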